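(* Let $G$ and $H$ be two connected nontrivial graphs. If $S$ is a cycle hull set of $G\Box H$, then $\pi_G(S)$ and $\pi_H(S)$ are cycle hull sets of $G$ and $H$ respectively.
   Context: All graphs are finite, simple and undirected. For a graph $G$ and $S\subseteq V(G)$, the cycle interval $\langle S\rangle$ consists of the vertices of $S$ together with every vertex $w\in V(G)\setminus S$ such that $G[S\cup\{w\}]$ contains a cycle through $w$; $S$ is cycle convex if $\langle S\rangle=S$; the cycle convex hull $\langle S\rangle_C$ is the smallest cycle convex set containing $S$; $S$ is a cycle hull set if $\langle S\rangle_C=V(G)$. The Cartesian product $G\Box H$ has vertex set $V(G)\times V(H)$, with $(g_1,h_1)\sim(g_2,h_2)$ iff ($g_1\sim g_2$ and $h_1=h_2$) or ($g_1=g_2$ and $h_1\sim h_2$). For $S\subseteq V(G)\times V(H)$, $\pi_G(S)=\{g:(g,h)\in S\text{ for some }h\}$ and $\pi_H(S)=\{h:(g,h)\in S\text{ for some }g\}$. A graph is nontrivial if it has at least two vertices. *)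

From mathcomp Require Import all_boot.
From mathcomp Require Import boolp.
Set Implicit Arguments. Unset Strict Implicit. Unset Printing Implicit Defensive.

(* A finite simple graph: vertex type T : finType, edge relation e : rel T
   assumed symmetric and irreflexive (hypotheses stated in the theorem). *)

Section CycleConvexity.
Variables (T : finType) (e : rel T).

Definition is_graph_cycle (c : seq T) : bool :=
  [&& 2 < size c, uniq c & cycle e c].

Definition cycle_through_in (A : {set T}) (w : T) : Prop :=
  exists c : seq T, [/\ is_graph_cycle c, w \in c & {subset c <= A}].

Definition cycle_interval (S : {set T}) : {set T} :=
  S :|: [set w | (w \notin S) && asbool (cycle_through_in (w |: S) w)].

Definition cycle_convex (S : {set T}) : Prop := cycle_interval S = S.

Definition cycle_hull (S : {set T}) : {set T} :=
  \bigcap_(U : {set T} | (S \subset U) && asbool (cycle_convex U)) U.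

Definition cycle_hull_set (S : {set T}) : Prop := cycle_hull S = setT.

End CycleConvexity.

Definition box_rel (T1 T2 : finType) (e1 : rel T1) (e2 : rel T2) : rel (T1 * T2) :=
  fun x y => (e1 x.1 y.1 && (x.2 == y.2)) || ((x.1 == y.1) && e2 x.2 y.2).

Definition projG (T1 T2 : finType) (S : {set T1 * T2}) : {set T1} := [set x.1 | x in S].
Definition projH (T1 T2 : finType) (S : {set T1 * T2}) : {set T2} := [set x.2 | x in S].

Definition connected_graph (T : finType) (e : rel T) : Prop := forall x y, connect e x y.

From mathcomp Require Import all_boot.
From mathcomp Require Import boolp.

Set Implicit Arguments.
Unset Strict Implicit.
Unset Printing Implicit Defensive.

(* The projection p : G □ H -> G maps every edge to an edge or collapses it,
   and it is injective on the neighbours of w that it moves off p w.  Hence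
   the preimage of a cycle convex set U of G is cycle convex: on a cycle
   through w whose other vertices lie over U, the two neighbours x, y of w
   project to distinct neighbours of p w, while the rest of the cycle
   projects to a walk from p x to p y inside U; shortening that walk to a
   path and closing it at p w gives a cycle through p w in U + p w.  So the
   preimage of a cycle convex superset of p(S) contains the hull of S, which
   is everything, and p is onto. *)

Section CycleConvexity.
Variables (T : finType) (e : rel T).

Lemma graph_cycle_rot n (c : seq T) :
  is_graph_cycle e (rot n c) = is_graph_cycle e c.
Proof. by rewrite /is_graph_cycle size_rot rot_uniq rot_cycle. Qed.

Lemma cycle_convexP (U : {set T}) :
  cycle_convex e U <-> forall w, w \notin U -> ~ cycle_through_in e (w |: U) w.
Proof.
split=> [cvxU w wU cyc_w | noCyc].
  move/setP: cvxU => /(_ w); rewrite !inE (negbTE wU) /=.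
  by move/asboolP: cyc_w => ->.
apply/setP => w; rewrite !inE.
by case: (boolP (w \in U)) => //= wU; apply/negbTE/asboolP/noCyc.
Qed.

Lemma cycle_hull_setP (S : {set T}) :
  cycle_hull_set e S <->
  forall U : {set T}, S \subset U -> cycle_convex e U -> U = setT.
Proof.
split=> [hullS U sSU cvxU | allT].
  apply/eqP; rewrite eqEsubset subsetT -hullS /cycle_hull.
  by apply: bigcap_inf; rewrite sSU; apply/asboolP.
by apply: big1 => U /andP[sSU /asboolP]; apply: allT.
Qed.

Lemma cycle_through_closing_path (A : {set T}) w x q :
  w \notin A -> {subset x :: q <= A} -> uniq (x :: q) -> x != last x q ->
  e w x -> path e x q -> e (last x q) w -> cycle_through_in e (w |: A) w.
Proof.
move=> wA sub_xq uniq_xq x_ne_last ewx path_xq elast.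
exists (w :: x :: q); split; last 2 first.
- exact: mem_head.
- move=> z; rewrite inE => /predU1P[-> | /sub_xq zA]; first exact: setU11.
  exact: setU1r.
have w_notin : w \notin x :: q by apply: contra wA => /sub_xq.
rewrite /is_graph_cycle cons_uniq w_notin uniq_xq /= rcons_path ewx path_xq elast.
by case: q x_ne_last {sub_xq uniq_xq path_xq elast w_notin} => //=; rewrite eqxx.
Qed.

End CycleConvexity.

Definition weak_hom {T T' : finType} (e : rel T) (e' : rel T') (f : T -> T') :=
  forall x y, e x y -> f x = f y \/ e' (f x) (f y).

Definition injective_on_moved_nbrs {T T' : finType} (e : rel T) (f : T -> T') :=
  forall w, {in [pred x | e w x & f x != f w] &, injective f}.

Section WeakHomPreimage.
Variables (T T' : finType) (e : rel T) (e' : rel T') (f : T -> T').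
Hypothesis hom_f : weak_hom e e' f.

Lemma weak_hom_path x p : path e x p ->
  exists q, [/\ path e' (f x) q, last (f x) q = f (last x p) & {subset q <= map f p}].
Proof.
elim: p x => [|y p IHp] x /=; first by exists [::].
case/andP=> exy /IHp[q [path_q last_q sub_q]].
case: (hom_f exy) => [fxy | e'fxy].
  by exists q; split; rewrite ?fxy // => z /sub_q zp; rewrite inE zp orbT.
exists (f y :: q); split; rewrite /= ?e'fxy //.
by move=> z; rewrite !inE => /predU1P[-> | /sub_q ->]; rewrite ?eqxx ?orbT.
Qed.

Hypotheses (sym_e : symmetric e) (inj_f : injective_on_moved_nbrs e f).
Variable U : {set T'}.

Lemma cycle_through_image w :
  f w \notin U -> cycle_through_in e (w |: f @^-1: U) w ->
  cycle_through_in e' (f w |: U) (f w).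
Proof.
move=> fwU [c [cyc_c wc sub_c]].
have [i p rot_c] := rot_to wc.
have : is_graph_cycle e (w :: p) by rewrite -rot_c graph_cycle_rot.
case/and3P=> size_p; rewrite cons_uniq => /andP[wp uniq_p].
have sub_p : {subset p <= f @^-1: U}.
  move=> z zp; have : z \in rot i c by rewrite rot_c inE zp orbT.
  rewrite mem_rot => /sub_c; rewrite !inE => /orP[/eqP zw | //].
  by rewrite -zw zp in wp.
case: p size_p wp uniq_p sub_p {rot_c} => [|x p] // size_p wp uniq_xp sub_xp.
rewrite /= rcons_path => /and3P[ewx path_xp elast].
set y := last x p in elast.
have yp : y \in p by move: size_p; rewrite /y; case: (p) => //= z p' _; apply: mem_last.
have x_ne_y : x != y.
  by move: uniq_xp; rewrite cons_uniq => /andP[xp _]; apply: contraNneq xp => ->.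
have moved z : z \in x :: p -> f z != f w.
  by move=> /sub_xp; rewrite inE; apply: contraTneq => ->.
have fx_ne_fy : f x != f y.
  apply: contra_neq x_ne_y; apply: (@inj_f w).
    by rewrite inE ewx moved ?mem_head.
  by rewrite inE sym_e elast moved ?mem_last.
have e'wx : e' (f w) (f x).
  by case: (hom_f ewx) => // fwx; have := moved x (mem_head x p); rewrite fwx eqxx.
have e'yw : e' (f y) (f w).
  by case: (hom_f elast) => // fyw; have := moved y (mem_last x p); rewrite fyw eqxx.
have [q [path_q last_q sub_q]] := weak_hom_path path_xp.
move: last_q; case: (shortenP path_q) => q' path_q' uniq_q' sub_q'q last_q'.
apply: (cycle_through_closing_path (x := f x) (q := q') fwU) => //.
- have fU z : z \in x :: p -> f z \in U by move/sub_xp; rewrite inE.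
  move=> z; rewrite inE => /predU1P[-> | /sub_q'q /sub_q /mapP[u up ->]].
    exact/fU/mem_head.
  by apply: fU; rewrite inE up orbT.
- by rewrite last_q'.
- by rewrite last_q'.
Qed.

Lemma preimset_cycle_convex : cycle_convex e' U -> cycle_convex e (f @^-1: U).
Proof.
move/cycle_convexP=> cvxU; apply/cycle_convexP => w.
by rewrite inE => fwU /(cycle_through_image fwU); apply: cvxU.
Qed.

End WeakHomPreimage.

Lemma cycle_hull_set_imset (T T' : finType) (e : rel T) (e' : rel T') (f : T -> T')
    (S : {set T}) :
  symmetric e -> weak_hom e e' f -> injective_on_moved_nbrs e f ->
  (forall y, exists x, f x = y) ->
  cycle_hull_set e S -> cycle_hull_set e' (f @: S).
Proof.
move=> sym_e hom_f inj_f surj_f /cycle_hull_setP hullS.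
apply/cycle_hull_setP => U sSU cvxU.
have preU_T : f @^-1: U = setT.
  apply: hullS (preimset_cycle_convex hom_f sym_e inj_f cvxU).
  by apply/subsetP => x xS; rewrite inE; apply: (subsetP sSU); apply: imset_f.
apply/setP => y; rewrite in_setT; have [x <-] := surj_f y.
have : x \in f @^-1: U by rewrite preU_T in_setT.
by rewrite inE.
Qed.

Section BoxProjections.
Variables (T1 T2 : finType) (e1 : rel T1) (e2 : rel T2).

Lemma box_rel_sym : symmetric e1 -> symmetric e2 -> symmetric (box_rel e1 e2).
Proof. by move=> sym1 sym2 x y; rewrite /box_rel sym1 sym2 eq_sym (eq_sym x.1). Qed.

Lemma weak_hom_fst : weak_hom (box_rel e1 e2) e1 fst.
Proof. by move=> x y /orP[/andP[e1xy _] | /andP[/eqP xy1 _]]; [right | left]. Qed.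

Lemma weak_hom_snd : weak_hom (box_rel e1 e2) e2 snd.
Proof. by move=> x y /orP[/andP[_ /eqP xy2] | /andP[_ e2xy]]; [left | right]. Qed.

Lemma box_rel_snd_eq w x : box_rel e1 e2 w x -> x.1 != w.1 -> x.2 = w.2.
Proof. by case/orP=> /andP[] => [_ /eqP -> // | /eqP -> _]; rewrite eqxx. Qed.

Lemma box_rel_fst_eq w x : box_rel e1 e2 w x -> x.2 != w.2 -> x.1 = w.1.
Proof. by case/orP=> /andP[] => [_ /eqP -> | /eqP -> _ //]; rewrite eqxx. Qed.

Lemma fst_injective_on_moved_nbrs : injective_on_moved_nbrs (box_rel e1 e2) fst.
Proof.
move=> w [x1 x2] [y1 y2]; rewrite !inE => /andP[wx x_moved] /andP[wy y_moved] /= ->.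
by have /= -> := box_rel_snd_eq wx x_moved; have /= -> := box_rel_snd_eq wy y_moved.
Qed.

Lemma snd_injective_on_moved_nbrs : injective_on_moved_nbrs (box_rel e1 e2) snd.
Proof.
move=> w [x1 x2] [y1 y2]; rewrite !inE => /andP[wx x_moved] /andP[wy y_moved] /= ->.
by have /= -> := box_rel_fst_eq wx x_moved; have /= -> := box_rel_fst_eq wy y_moved.
Qed.

End BoxProjections.

Theorem mainTheorem5 (T1 T2 : finType) (e1 : rel T1) (e2 : rel T2)
  (sym1 : symmetric e1) (irr1 : irreflexive e1)
  (sym2 : symmetric e2) (irr2 : irreflexive e2)
  (conn1 : connected_graph e1) (conn2 : connected_graph e2)
  (nt1 : 1 < #|T1|) (nt2 : 1 < #|T2|)
  (S : {set T1 * T2}) :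
  cycle_hull_set (box_rel e1 e2) S ->
  cycle_hull_set e1 (projG S) /\ cycle_hull_set e2 (projH S).
Proof.
move=> hullS; have sym12 := box_rel_sym sym1 sym2.
have /card_gt0P[g0 _] := ltnW nt1; have /card_gt0P[h0 _] := ltnW nt2.
split.
- apply: (cycle_hull_set_imset sym12 (@weak_hom_fst _ _ e1 e2)
    (@fst_injective_on_moved_nbrs _ _ e1 e2) _ hullS).
  by move=> g; exists (g, h0).
- apply: (cycle_hull_set_imset sym12 (@weak_hom_snd _ _ e1 e2)
    (@snd_injective_on_moved_nbrs _ _ e1 e2) _ hullS).
  by move=> h; exists (g0, h).
Qed.
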